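(* Let $(\gamma_n)$ be a sequence of positive reals satisfying conditions (C1)–(C7) below, and let $f\in\mathcal{L}$. Then the sequence $\beta_n^f(t)$ converges to a constant function $L$, and the sequence \[ \nu_n^f(t)=\frac{\sum_{k=0}^n |K^k[f(t)]|^2}{\sum_{k=0}^n \frac{1}{\gamma_k}} \] converges to the constant function $L/2$, uniformly on every compact interval.
   Context: Given positive reals $\gamma_n$, set $\gamma_{-1}=1$, $p_{-1}=0$, $p_0=1$ and $\gamma_n p_{n+1}(\omega)=\omega p_n(\omega)-\gamma_{n-1}p_{n-1}(\omega)$ ($n\ge0$). Let $\Delta_n=\gamma_{n+1}-\gamma_n$, $\Delta^2_n=\Delta_{n+1}-\Delta_n$. Conditions: (C1) $\gamma_n\to\infty$; (C2) $\Delta_n\to0$; (C3) there exist $n_0,m_0$ with $\gamma_{n+m}>\gamma_n$ for all $n\ge n_0$, $m\ge m_0$; (C4) $\sum 1/\gamma_j=\infty$; (C5) some $\kappa>1$ has $\sum\gamma_j^{-\kappa}<\infty$; (C6) $\sum|\Delta_n|/\gamma_n^2<\infty$; (C7) $\sum|\Delta^2_n|/\gamma_n<\infty$. $C^\infty_{\mathbb{R}\to\mathbb{C}}$ is the set of functions $\mathbb{R}\to\mathbb{C}$ with infinitely differentiable real and imaginary parts. $K^n_t=(-i)^n p_n\!\left(i\frac{d}{dt}\right)$ (index $t$ may be omitted). $\beta_n^f(t)=\gamma_n(|K^n[f(t)]|^2+|K^{n+1}[f(t)]|^2)$, and $\mathcal{L}$ is the set of $f\in C^\infty_{\mathbb{R}\to\mathbb{C}}$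 for which $\beta_n^f(t)$ converges uniformly on every compact interval. *)

From Stdlib Require Import Reals.
From Coquelicot Require Import Coquelicot.
Open Scope R_scope.

(* gamma_{n-1}, with the convention gamma_{-1} = 1 *)
Definition gam_prev (g : nat -> R) (n : nat) : R :=
  match n with O => 1 | S m => g m end.

Definition shift_coef (c : nat -> R) (k : nat) : R :=
  match k with O => 0 | S j => c j end.

(* pp g n = (coefficients of p_{n-1}, coefficients of p_n), where
   coefficient k is the coefficient of omega^k; p_{-1}=0, p_0=1 and
   gamma_n p_{n+1} = omega p_n - gamma_{n-1} p_{n-1}. *)
Fixpoint pp (g : nat -> R) (n : nat) : (nat -> R) * (nat -> R) :=
  match n with
  | O => (fun _ => 0, fun k => match k with O => 1 | S _ => 0 end)
  | S m => let (a, b) := pp g m in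
           (b, fun k => (shift_coef b k - gam_prev g m * a k) / g m)
  end.

Definition pcoef (g : nat -> R) (n k : nat) : R := snd (pp g n) k.

Fixpoint Csum (F : nat -> C) (n : nat) : C :=
  match n with O => F O | S m => Cplus (Csum F m) (F (S m)) end.
Fixpoint Rsum (F : nat -> R) (n : nat) : R :=
  match n with O => F O | S m => Rsum F m + F (S m) end.

Definition smoothC (f : R -> C) : Prop :=
  forall (k : nat) (t : R),
    ex_derive_n (fun s => fst (f s)) k t /\ ex_derive_n (fun s => snd (f s)) k t.

Definition DnC (f : R -> C) (k : nat) (t : R) : C :=
  (Derive_n (fun s => fst (f s)) k t, Derive_n (fun s => snd (f s)) k t).

(* K^n[f](t) = (-i)^n p_n(i d/dt) f (t); p_n has degree <= n *)
Definition Kop (g : nat -> R) (n : nat) (f : R -> C) (t : R) : C :=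
  Cmult (Cpow (Copp Ci) n)
    (Csum (fun k => Cmult (RtoC (pcoef g n k)) (Cmult (Cpow Ci k) (DnC f k t))) n).

Definition beta (g : nat -> R) (f : R -> C) (n : nat) (t : R) : R :=
  g n * (Cmod (Kop g n f t) ^ 2 + Cmod (Kop g (S n) f t) ^ 2).

Definition nu (g : nat -> R) (f : R -> C) (n : nat) (t : R) : R :=
  Rsum (fun k => Cmod (Kop g k f t) ^ 2) n / Rsum (fun k => / g k) n.

Definition unif_cv_compact (u : nat -> R -> R) (l : R -> R) : Prop :=
  forall a b eps : R, 0 < eps ->
    exists N : nat, forall n : nat, (N <= n)%nat ->
      forall t : R, a <= t <= b -> Rabs (u n t - l t) < eps.

Definition in_L (g : nat -> R) (f : R -> C) : Prop :=
  smoothC f /\ exists l : R -> R, unif_cv_compact (beta g f) l.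

Definition Delta (g : nat -> R) (n : nat) : R := g (S n) - g n.
Definition Delta2 (g : nat -> R) (n : nat) : R := Delta g (S n) - Delta g n.

Definition conditions (g : nat -> R) : Prop :=
  (forall n, 0 < g n) /\
  (* C1 *) is_lim_seq g p_infty /\
  is_lim_seq (Delta g) 0 /\
  (exists n0 m0 : nat, forall n m : nat, (n0 <= n)%nat -> (m0 <= m)%nat ->
              g n < g (n + m)%nat) /\
  (* C4 *) is_lim_seq (Rsum (fun j => / g j)) p_infty /\
  (exists kappa : R, 1 < kappa /\ ex_series (fun j => / Rpower (g j) kappa)) /\
  ex_series (fun n => Rabs (Delta g n) / (g n) ^ 2) /\
  ex_series (fun n => Rabs (Delta2 g n) / g n).

From Stdlib Require Import Reals Lra Lia.
From Coquelicot Require Import Coquelicot.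
Open Scope R_scope.

(* Write [K^n f = (-i)^n u_n] with [u_n = p_n(i d/dt) f] ([Kp] below).  The three-term
   recurrence gives [u_n' = -i (g_n u_(n+1) + g_(n-1) u_(n-1))], so [d/dt |K^n f|^2 =
   2 (F_n - F_(n-1))] for the flux [F_n = g_n Im(conj(u_n) u_(n+1))]; the partial sums [S_n] of
   [|K^k f|^2] thus satisfy [S_n' = 2 F_n] with [|2 F_n| <= beta_n].  Summing
   [beta_k / g_k = |K^k f|^2 + |K^(k+1) f|^2] gives
   [2 S_n = sum_(k<=n) beta_k / g_k + |K^0 f|^2 - |K^(n+1) f|^2], so [nu_n] is, up to boundary
   terms that (C1) makes negligible, a Cesaro mean of [beta_k / 2] with weights [1/g_k], whose
   total diverges by (C4).  Hence [nu_n -> l/2] uniformly, [l] being the limit of [beta_n].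
   Finally [|nu_n(t) - nu_n(s)| <= sup beta_n |t - s| / sum_(k<=n) 1/g_k -> 0], so [l] is
   constant.  Only positivity of [g], (C1) and (C4) are needed. *)

Definition is_derive_C (F : R -> C) (t : R) (D : C) : Prop :=
  is_derive (fun s => fst (F s)) t (fst D) /\ is_derive (fun s => snd (F s)) t (snd D).

Lemma is_derive_C_plus (F G : R -> C) t DF DG :
  is_derive_C F t DF -> is_derive_C G t DG ->
  is_derive_C (fun s => Cplus (F s) (G s)) t (Cplus DF DG).
Proof.
  intros [HF1 HF2] [HG1 HG2]; split.
  - exact (is_derive_plus _ _ _ _ _ HF1 HG1).
  - exact (is_derive_plus _ _ _ _ _ HF2 HG2).
Qed.

Lemma is_derive_C_scal (z : C) (F : R -> C) t D :
  is_derive_C F t D -> is_derive_C (fun s => Cmult z (F s)) t (Cmult z D).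
Proof.
  destruct z as [p q]; intros [H1 H2]; split; simpl.
  - exact (is_derive_minus _ _ _ _ _ (is_derive_scal _ _ p _ H1) (is_derive_scal _ _ q _ H2)).
  - exact (is_derive_plus _ _ _ _ _ (is_derive_scal _ _ p _ H2) (is_derive_scal _ _ q _ H1)).
Qed.

Lemma Cmod_sqr (z : C) : Cmod z ^ 2 = fst z ^ 2 + snd z ^ 2.
Proof. unfold Cmod; rewrite pow2_sqrt; nra. Qed.

Lemma is_derive_Cmod_sqr (F : R -> C) t D : is_derive_C F t D ->
  is_derive (fun s => Cmod (F s) ^ 2) t (2 * (fst (F t) * fst D + snd (F t) * snd D)).
Proof.
  intros [H1 H2].
  apply is_derive_ext with (f := fun s => fst (F s) ^ 2 + snd (F s) ^ 2).
  { intros s; symmetry; apply Cmod_sqr. }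
  replace (2 * _) with (INR 2 * fst D * fst (F t) ^ 1 + INR 2 * snd D * snd (F t) ^ 1)
    by (simpl; ring).
  exact (is_derive_plus _ _ _ _ _ (is_derive_pow _ 2 _ _ H1) (is_derive_pow _ 2 _ _ H2)).
Qed.

Lemma is_derive_C_DnC (f : R -> C) k t :
  smoothC f -> is_derive_C (DnC f k) t (DnC f (S k) t).
Proof. intros Hf; destruct (Hf (S k) t); split; now apply Derive_correct. Qed.

Definition poly_iD (f : R -> C) (c : nat -> R) (m : nat) (t : R) : C :=
  Csum (fun k => Cmult (RtoC (c k)) (Cmult (Cpow Ci k) (DnC f k t))) m.

Lemma Csum_ext (F G : nat -> C) m :
  (forall k, (k <= m)%nat -> F k = G k) -> Csum F m = Csum G m.
Proof.
  induction m as [|m IH]; intros H; simpl.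
  - apply H; lia.
  - rewrite IH by (intros; apply H; lia). now rewrite H by lia.
Qed.

Lemma poly_iD_ext f (c d : nat -> R) m t :
  (forall k, c k = d k) -> poly_iD f c m t = poly_iD f d m t.
Proof. intros H; apply Csum_ext; intros k _; now rewrite H. Qed.

Lemma poly_iD_lin f (c d : nat -> R) (a b : R) m t :
  poly_iD f (fun k => a * c k + b * d k) m t =
  Cplus (Cmult (RtoC a) (poly_iD f c m t)) (Cmult (RtoC b) (poly_iD f d m t)).
Proof.
  induction m as [|m IH]; unfold poly_iD in *; simpl; [|rewrite IH];
    apply injective_projections; simpl; ring.
Qed.

Lemma poly_iD_trunc f (c : nat -> R) m m' t : (m <= m')%nat ->
  (forall k, (m < k)%nat -> c k = 0) -> poly_iD f c m' t = poly_iD f c m t.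
Proof.
  intros Hm Hc; induction Hm as [|m' Hm IH]; auto.
  unfold poly_iD in *; simpl. rewrite IH, Hc by lia. ring.
Qed.

Lemma is_derive_poly_iD f (c : nat -> R) m t : smoothC f ->
  is_derive_C (poly_iD f c m) t (Cmult (Copp Ci) (poly_iD f (shift_coef c) (S m) t)).
Proof.
  intros Hf; induction m as [|m IH]; unfold poly_iD in *.
  - replace (Cmult _ _) with (Cmult (RtoC (c 0%nat)) (Cmult (Cpow Ci 0) (DnC f 1 t)))
      by (apply injective_projections; simpl; ring).
    now apply is_derive_C_scal, is_derive_C_scal, is_derive_C_DnC.
  - replace (Cmult (Copp Ci) _) with
      (Cplus (Cmult (Copp Ci) (Csum (fun k => Cmult (RtoC (shift_coef c k))
                                  (Cmult (Cpow Ci k) (DnC f k t))) (S m)))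
             (Cmult (RtoC (c (S m))) (Cmult (Cpow Ci (S m)) (DnC f (S (S m)) t)))).
    + apply is_derive_C_plus; [exact IH|].
      now apply is_derive_C_scal, is_derive_C_scal, is_derive_C_DnC.
    + set (P := Csum (fun k => Cmult (RtoC (shift_coef c k))
                                  (Cmult (Cpow Ci k) (DnC f k t))) (S m)).
      change (Csum _ (S (S m))) with
        (Cplus P (Cmult (RtoC (c (S m))) (Cmult (Cpow Ci (S (S m))) (DnC f (S (S m)) t)))).
      generalize P (Cpow Ci m) (DnC f (S (S m)) t).
      intros x y z; apply injective_projections; simpl; ring.
Qed.

Lemma pp_fst_S g n : fst (pp g (S n)) = pcoef g n.
Proof. unfold pcoef; simpl; now destruct (pp g n). Qed.

Lemma pcoef_S g n k :
  pcoef g (S n) k = (shift_coef (pcoef g n) k - gam_prev g n * fst (pp g n) k) / g n.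
Proof. unfold pcoef; simpl; now destruct (pp g n). Qed.

Lemma pp_vanish g n :
  (forall k, (n < k)%nat -> pcoef g n k = 0) /\ (forall k, (n <= k)%nat -> fst (pp g n) k = 0).
Proof.
  unfold pcoef; induction n as [|n [IH1 IH2]]; simpl.
  - split; intros [|k] Hk; auto; lia.
  - destruct (pp g n) as [a b]; simpl in *; split; intros k Hk.
    + destruct k as [|k]; [lia|]. simpl. rewrite IH1, IH2 by lia. unfold Rdiv; ring.
    + apply IH1; lia.
Qed.

Definition Kp (g : nat -> R) (n : nat) (f : R -> C) (t : R) : C :=
  poly_iD f (pcoef g n) n t.

Definition Kp_prev (g : nat -> R) (n : nat) (f : R -> C) (t : R) : C :=
  match n with O => RtoC 0 | S m => Kp g m f t end.

Lemma Cmod_Kop g n f t : Cmod (Kop g n f t) = Cmod (Kp g n f t).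
Proof.
  unfold Kop; rewrite Cmod_mult, Cmod_pow, Cmod_opp, Cmod_Ci, pow1.
  apply Rmult_1_l.
Qed.

Lemma poly_iD_pp_fst g n f t : poly_iD f (fst (pp g n)) (S n) t = Kp_prev g n f t.
Proof.
  destruct n as [|m].
  - apply injective_projections; simpl; ring.
  - rewrite pp_fst_S. apply poly_iD_trunc; [lia|]. apply (pp_vanish g m).
Qed.

Lemma poly_iD_shift_pcoef g n f t : g n <> 0 ->
  poly_iD f (shift_coef (pcoef g n)) (S n) t =
  Cplus (Cmult (RtoC (g n)) (Kp g (S n) f t))
        (Cmult (RtoC (gam_prev g n)) (Kp_prev g n f t)).
Proof.
  intros Hg.
  rewrite (poly_iD_ext f _ (fun k => g n * pcoef g (S n) k + gam_prev g n * fst (pp g n) k))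
    by (intros k; rewrite pcoef_S; field; exact Hg).
  now rewrite poly_iD_lin, poly_iD_pp_fst.
Qed.

Lemma is_derive_Kp g n f t : g n <> 0 -> smoothC f ->
  is_derive_C (Kp g n f) t
    (Cmult (Copp Ci) (Cplus (Cmult (RtoC (g n)) (Kp g (S n) f t))
                            (Cmult (RtoC (gam_prev g n)) (Kp_prev g n f t)))).
Proof.
  intros Hg Hf; rewrite <- poly_iD_shift_pcoef by exact Hg.
  now apply is_derive_poly_iD.
Qed.

Definition flux (g : nat -> R) (f : R -> C) (n : nat) (t : R) : R :=
  g n * (fst (Kp g n f t) * snd (Kp g (S n) f t) - snd (Kp g n f t) * fst (Kp g (S n) f t)).

Lemma is_derive_Cmod_Kop g f n t : g n <> 0 -> smoothC f ->
  is_derive (fun s => Cmod (Kop g n f s) ^ 2) t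
    (2 * (flux g f n t - match n with O => 0 | S m => flux g f m t end)).
Proof.
  intros Hg Hf.
  apply is_derive_ext with (f := fun s => Cmod (Kp g n f s) ^ 2).
  { intros s; now rewrite Cmod_Kop. }
  assert (HD := is_derive_Cmod_sqr _ t _ (is_derive_Kp g n f t Hg Hf)).
  match type of HD with is_derive _ _ ?D => replace (2 * _) with D; [exact HD|] end.
  unfold flux; destruct n; simpl; ring.
Qed.

Lemma is_derive_sum_Cmod_Kop g f n t : (forall k, g k <> 0) -> smoothC f ->
  is_derive (fun s => Rsum (fun k => Cmod (Kop g k f s) ^ 2) n) t (2 * flux g f n t).
Proof.
  intros Hg Hf; induction n as [|n IH]; simpl.
  - replace (2 * flux g f 0 t) with (2 * (flux g f 0 t - 0)) by ring.
    now apply is_derive_Cmod_Kop.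
  - replace (2 * flux g f (S n) t) with
      (2 * flux g f n t + 2 * (flux g f (S n) t - flux g f n t)) by ring.
    exact (is_derive_plus _ _ _ _ _ IH (is_derive_Cmod_Kop g f (S n) t (Hg _) Hf)).
Qed.

Lemma flux_le_beta g f n t : 0 <= g n -> Rabs (2 * flux g f n t) <= beta g f n t.
Proof.
  intros Hg; unfold beta, flux; rewrite !Cmod_Kop, !Cmod_sqr.
  set (x1 := fst (Kp g n f t)); set (y1 := snd (Kp g n f t)).
  set (x2 := fst (Kp g (S n) f t)); set (y2 := snd (Kp g (S n) f t)).
  rewrite Rabs_mult, Rabs_mult, (Rabs_pos_eq 2), (Rabs_pos_eq (g n)) by lra.
  assert (Hw : Rabs (x1 * y2 - y1 * x2) * 2 <= x1 ^ 2 + y1 ^ 2 + (x2 ^ 2 + y2 ^ 2)).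
  { pose proof (pow2_ge_0 (x1 - y2)); pose proof (pow2_ge_0 (y1 + x2));
    pose proof (pow2_ge_0 (x1 + y2)); pose proof (pow2_ge_0 (y1 - x2));
    unfold Rabs; destruct Rcase_abs; nra. }
  nra.
Qed.

Lemma sum_Cmod_Kop_beta g f n t : (forall k, g k <> 0) ->
  2 * Rsum (fun k => Cmod (Kop g k f t) ^ 2) n =
  Rsum (fun k => beta g f k t / g k) n + Cmod (Kop g 0 f t) ^ 2 - Cmod (Kop g (S n) f t) ^ 2.
Proof.
  intros Hg; unfold beta; induction n as [|n IH]; cbn [Rsum].
  - field; apply Hg.
  - rewrite Rmult_plus_distr_l, IH; field; apply Hg.
Qed.

Lemma ex_derive_beta g f n t : (forall k, g k <> 0) -> smoothC f -> ex_derive (beta g f n) t.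
Proof.
  intros Hg Hf; unfold beta; apply ex_derive_scal.
  apply (ex_derive_plus (fun s => Cmod (Kop g n f s) ^ 2) (fun s => Cmod (Kop g (S n) f s) ^ 2));
    eexists; now apply is_derive_Cmod_Kop.
Qed.

Lemma Rsum_ext (F G : nat -> R) n : (forall k, F k = G k) -> Rsum F n = Rsum G n.
Proof. intros H; induction n; cbn [Rsum]; rewrite ?IHn; now rewrite H. Qed.

Lemma Rsum_plus (F G : nat -> R) n : Rsum (fun k => F k + G k) n = Rsum F n + Rsum G n.
Proof. induction n as [|n IH]; cbn [Rsum]; [|rewrite IH]; ring. Qed.

Lemma Rsum_scal (F : nat -> R) c n : Rsum (fun k => c * F k) n = c * Rsum F n.
Proof. induction n as [|n IH]; cbn [Rsum]; [|rewrite IH]; ring. Qed.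

Lemma Rsum_pos (F : nat -> R) n : (forall k, 0 < F k) -> 0 < Rsum F n.
Proof. intros H; induction n; cbn [Rsum]; [|specialize (H (S n))]; auto; lra. Qed.

Lemma Rsum_le (F G : nat -> R) n :
  (forall k, (k <= n)%nat -> F k <= G k) -> Rsum F n <= Rsum G n.
Proof.
  induction n as [|n IH]; intros H; cbn [Rsum]; [apply H; lia|].
  pose proof (H (S n) (le_n _)); pose proof (IH (fun k Hk => H k ltac:(lia))); lra.
Qed.

Lemma Rabs_Rsum_le (F : nat -> R) n : Rabs (Rsum F n) <= Rsum (fun k => Rabs (F k)) n.
Proof.
  induction n; cbn [Rsum]; [lra|]. eapply Rle_trans; [apply Rabs_triang|lra].
Qed.

Lemma Rabs_Rsum_tail_le (w e : nat -> R) N delta : (forall k, 0 < w k) ->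
  (forall k, (N < k)%nat -> Rabs (e k) <= delta) ->
  forall n, (N <= n)%nat ->
  Rabs (Rsum (fun k => w k * e k) n) <= Rabs (Rsum (fun k => w k * e k) N) + delta * Rsum w n.
Proof.
  intros Hw He n Hn; induction Hn as [|n Hn IH].
  - assert (0 <= delta * Rsum w N); [|lra].
    apply Rmult_le_pos; [|now apply Rlt_le, Rsum_pos].
    specialize (He (S N) (Nat.lt_succ_diag_r N)); pose proof (Rabs_pos (e (S N))); lra.
  - cbn [Rsum]. eapply Rle_trans; [apply Rabs_triang|].
    rewrite Rabs_mult, (Rabs_pos_eq (w (S n))) by (apply Rlt_le, Hw).
    pose proof (Rmult_le_compat_l _ _ _ (Rlt_le _ _ (Hw (S n))) (He (S n) ltac:(lia))). lra.
Qed.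

Lemma Rabs_div_lt x h B eps : 0 < h -> Rabs x <= B -> B < eps * h -> Rabs (x / h) < eps.
Proof.
  intros Hh Hx HB; rewrite Rabs_div, (Rabs_pos_eq h) by lra.
  apply Rmult_lt_reg_r with h; [lra|]. unfold Rdiv; rewrite Rmult_assoc, Rinv_l; lra.
Qed.

Lemma is_lim_seq_p_infty_eventually (u : nat -> R) : is_lim_seq u p_infty ->
  forall K, exists N, forall n, (N <= n)%nat -> K < u n.
Proof. intros H K; apply is_lim_seq_spec in H. destruct (H K) as [N HN]; now exists N. Qed.

Lemma Rabs_sub_le_derive (F F' : R -> R) s t M : (forall x, is_derive F x (F' x)) ->
  (forall c, Rmin s t <= c <= Rmax s t -> Rabs (F' c) <= M) ->
  Rabs (F t - F s) <= M * Rabs (t - s).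
Proof.
  intros HF HM.
  destruct (MVT_abs F F' s t) as [c [Hc Hcst]]; [intros c _; apply is_derive_Reals, HF|].
  rewrite Hc; apply Rmult_le_compat_r; [apply Rabs_pos|auto].
Qed.

Definition bounded_on (a b : R) (F : R -> R) : Prop :=
  exists B, forall t, a <= t <= b -> Rabs (F t) <= B.

Lemma ex_derive_bounded_on (F : R -> R) a b : (forall t, ex_derive F t) -> bounded_on a b F.
Proof.
  intros HF; destruct (Rle_dec a b) as [Hab|Hab]; [|exists 0; intros; lra].
  destruct (continuity_ab_maj (fun t => Rabs (F t)) a b Hab) as [x [Hx _]].
  - intros c _; apply (continuity_pt_comp F Rabs); [|apply Rcontinuity_abs].
    apply continuity_pt_filterlim; exact (ex_derive_continuous F c (HF c)).
  - now exists (Rabs (F x)).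
Qed.

Lemma bounded_on_upto a b (e : nat -> R -> R) : (forall k, bounded_on a b (e k)) ->
  forall N, exists B, forall k t, (k <= N)%nat -> a <= t <= b -> Rabs (e k t) <= B.
Proof.
  intros He N; induction N as [|N [B IH]].
  - destruct (He 0%nat) as [B HB]; exists B; intros k t Hk Ht.
    replace k with 0%nat by lia; now apply HB.
  - destruct (He (S N)) as [B' HB']; exists (Rmax B B'); intros k t Hk Ht.
    destruct (Nat.eq_dec k (S N)) as [->|Hne].
    + eapply Rle_trans; [apply HB', Ht|apply Rmax_r].
    + eapply Rle_trans; [apply IH; [lia|exact Ht]|apply Rmax_l].
Qed.

Definition eventually_bounded_on (a b : R) (u : nat -> R -> R) : Prop :=
  exists N B, forall n t, (N <= n)%nat -> a <= t <= b -> Rabs (u n t) <= B.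

Lemma bounded_on_minus a b (F G : R -> R) :
  bounded_on a b F -> bounded_on a b G -> bounded_on a b (fun t => F t - G t).
Proof.
  intros [BF HF] [BG HG]; exists (BF + BG); intros t Ht.
  pose proof (Rabs_triang (F t) (- G t)); rewrite Rabs_Ropp in *.
  specialize (HF t Ht); specialize (HG t Ht); unfold Rminus; lra.
Qed.

Definition unif_null_on (a b : R) (u : nat -> R -> R) : Prop :=
  forall eps, 0 < eps -> exists N, forall n, (N <= n)%nat ->
    forall t, a <= t <= b -> Rabs (u n t) < eps.

Lemma unif_null_on_plus a b (u v : nat -> R -> R) :
  unif_null_on a b u -> unif_null_on a b v -> unif_null_on a b (fun n t => u n t + v n t).
Proof.
  intros Hu Hv eps Heps.
  destruct (Hu (eps / 2)) as [N1 H1]; [lra|]. destruct (Hv (eps / 2)) as [N2 H2]; [lra|].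
  exists (max N1 N2); intros n Hn t Ht.
  specialize (H1 n ltac:(lia) t Ht); specialize (H2 n ltac:(lia) t Ht).
  pose proof (Rabs_triang (u n t) (v n t)); lra.
Qed.

Lemma unif_null_on_le a b (u v : nat -> R -> R) :
  (forall n t, a <= t <= b -> Rabs (v n t) <= Rabs (u n t)) ->
  unif_null_on a b u -> unif_null_on a b v.
Proof.
  intros Hvu Hu eps Heps; destruct (Hu eps Heps) as [N HN].
  exists N; intros n Hn t Ht; eapply Rle_lt_trans; [apply Hvu, Ht|now apply HN].
Qed.

Lemma unif_null_on_div_infty a b (x : nat -> R -> R) (h : nat -> R) :
  eventually_bounded_on a b x ->
  is_lim_seq h p_infty -> unif_null_on a b (fun n t => x n t / h n).
Proof.
  intros [N [B HB]] Hh eps Heps.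
  destruct (is_lim_seq_p_infty_eventually h Hh (Rmax 0 (B / eps))) as [N' HN'].
  exists (max N N'); intros n Hn t Ht.
  specialize (HN' n ltac:(lia)). pose proof (Rmax_l 0 (B / eps)); pose proof (Rmax_r 0 (B / eps)).
  apply Rabs_div_lt with B; [lra|apply HB; [lia|exact Ht]|].
  apply Rmult_lt_reg_r with (/ eps); [now apply Rinv_0_lt_compat|].
  replace (eps * h n * / eps) with (h n) by (field; lra). unfold Rdiv in *; lra.
Qed.

Lemma unif_null_on_cesaro a b (w : nat -> R) (e : nat -> R -> R) :
  (forall k, 0 < w k) -> is_lim_seq (Rsum w) p_infty ->
  (forall k, bounded_on a b (e k)) -> unif_null_on a b e ->
  unif_null_on a b (fun n t => Rsum (fun k => w k * e k t) n / Rsum w n).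
Proof.
  intros Hw Hsum Hbd He eps Heps.
  destruct (He (eps / 2)) as [N HN]; [lra|].
  destruct (bounded_on_upto a b e Hbd N) as [B HB].
  assert (Hhead : forall t, a <= t <= b ->
    Rabs (Rsum (fun k => w k * e k t) N) <= B * Rsum w N).
  { intros t Ht; eapply Rle_trans; [apply Rabs_Rsum_le|].
    rewrite <- Rsum_scal. apply Rsum_le; intros k Hk.
    rewrite Rabs_mult, (Rabs_pos_eq (w k)), Rmult_comm by (apply Rlt_le, Hw).
    apply Rmult_le_compat_r; [apply Rlt_le, Hw|now apply HB]. }
  set (C := Rmax 0 (B * Rsum w N)).
  destruct (is_lim_seq_p_infty_eventually _ Hsum (2 * C / eps)) as [N' HN'].
  exists (max N N'); intros n Hn t Ht.
  assert (HCn : 2 * C < eps * Rsum w n).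
  { specialize (HN' n ltac:(lia)). apply Rmult_lt_compat_l with (r := eps) in HN'; [|exact Heps].
    replace (eps * (2 * C / eps)) with (2 * C) in HN' by (field; lra). exact HN'. }
  apply Rabs_div_lt with (C + eps / 2 * Rsum w n); [apply Rsum_pos, Hw| |lra].
  eapply Rle_trans.
  - apply (Rabs_Rsum_tail_le w (fun k => e k t) N (eps / 2) Hw); [|lia].
    intros k Hk; apply Rlt_le, HN; [lia|exact Ht].
  - pose proof (Hhead t Ht); pose proof (Rmax_r 0 (B * Rsum w N)); unfold C; lra.
Qed.

Lemma unif_null_on_limit_bounded a b (u : nat -> R -> R) (l : R -> R) :
  (forall n, bounded_on a b (u n)) -> unif_null_on a b (fun n t => u n t - l t) ->
  bounded_on a b l /\ eventually_bounded_on a b u.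
Proof.
  intros Hu Hl; destruct (Hl 1 Rlt_0_1) as [N HN]; destruct (Hu N) as [B HB].
  assert (Hlb : forall t, a <= t <= b -> Rabs (l t) <= B + 1).
  { intros t Ht; specialize (HN N (le_n N) t Ht); specialize (HB t Ht).
    pose proof (Rabs_triang_inv (l t) (u N t)); pose proof (Rabs_minus_sym (u N t) (l t)); lra. }
  split; [now exists (B + 1)|]. exists N, (B + 2); intros n t Hn Ht.
  specialize (HN n Hn t Ht); specialize (Hlb t Ht).
  pose proof (Rabs_triang_inv (u n t) (l t)); lra.
Qed.

Lemma unif_cv_compact_ext (u : nat -> R -> R) (l m : R -> R) :
  (forall t, l t = m t) -> unif_cv_compact u l -> unif_cv_compact u m.
Proof.
  intros Hlm Hu a b eps Heps; destruct (Hu a b eps Heps) as [N HN].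
  exists N; intros n Hn t Ht; rewrite <- Hlm; now apply HN.
Qed.

Section Limit.

Variables (g : nat -> R) (f : R -> C) (l : R -> R).
Hypothesis g_pos : forall k, 0 < g k.
Hypothesis f_smooth : smoothC f.
Hypothesis beta_cv : unif_cv_compact (beta g f) l.
Hypothesis g_infty : is_lim_seq g p_infty.
Hypothesis harmonic_infty : is_lim_seq (Rsum (fun k => / g k)) p_infty.

Lemma g_neq0 k : g k <> 0.
Proof. apply Rgt_not_eq, g_pos. Qed.

Lemma harmonic_pos n : 0 < Rsum (fun k => / g k) n.
Proof. apply Rsum_pos; intros k; apply Rinv_0_lt_compat, g_pos. Qed.

Lemma beta_bounded_on a b n : bounded_on a b (beta g f n).
Proof.
  apply ex_derive_bounded_on; intros t; apply ex_derive_beta; [exact g_neq0|exact f_smooth].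
Qed.

Lemma beta_limit_bounded a b :
  bounded_on a b l /\ eventually_bounded_on a b (beta g f).
Proof. exact (unif_null_on_limit_bounded a b _ l (beta_bounded_on a b) (beta_cv a b)). Qed.

Lemma nu_sub_half n t : nu g f n t - l t / 2 =
  (Rsum (fun k => / g k * (beta g f k t - l t)) n / Rsum (fun k => / g k) n
   + Cmod (Kop g 0 f t) ^ 2 / Rsum (fun k => / g k) n
   + - (Cmod (Kop g (S n) f t) ^ 2 / Rsum (fun k => / g k) n)) / 2.
Proof.
  assert (Hsq := sum_Cmod_Kop_beta g f n t g_neq0).
  rewrite (Rsum_ext _ (fun k => beta g f k t / g k + - l t * / g k)), Rsum_plus, Rsum_scal
    by (intros k; field; apply g_neq0).
  unfold nu; replace (Rsum (fun k => Cmod (Kop g k f t) ^ 2) n) with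
    ((Rsum (fun k => beta g f k t / g k) n + Cmod (Kop g 0 f t) ^ 2
      - Cmod (Kop g (S n) f t) ^ 2) / 2) by lra.
  field; apply Rgt_not_eq, harmonic_pos.
Qed.

Lemma nu_unif_cv : unif_cv_compact (nu g f) (fun t => l t / 2).
Proof.
  intros a b; change (unif_null_on a b (fun n t => nu g f n t - l t / 2)).
  set (weight n := Rsum (fun k => / g k) n).
  destruct (beta_limit_bounded a b) as [l_bd [N [M HM]]].
  apply unif_null_on_le with (u := fun n t =>
    Rsum (fun k => / g k * (beta g f k t - l t)) n / weight n + Cmod (Kop g 0 f t) ^ 2 / weight n
    + - (Cmod (Kop g (S n) f t) ^ 2 / weight n)).
  { intros n t _; rewrite nu_sub_half, Rabs_div, (Rabs_pos_eq 2) by lra.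
    match goal with |- Rabs ?x / 2 <= _ => pose proof (Rabs_pos x) end; unfold weight; lra. }
  apply unif_null_on_plus; [apply unif_null_on_plus|].
  - apply unif_null_on_cesaro; [intros k; apply Rinv_0_lt_compat, g_pos|exact harmonic_infty| |].
    + intros k; exact (bounded_on_minus a b _ l (beta_bounded_on a b k) l_bd).
    + exact (beta_cv a b).
  - apply unif_null_on_div_infty; [|exact harmonic_infty].
    destruct (ex_derive_bounded_on (fun t => Cmod (Kop g 0 f t) ^ 2) a b) as [B HB].
    { intros t; eexists; apply is_derive_Cmod_Kop; [apply g_neq0|exact f_smooth]. }
    exists 0%nat, B; intros n t _; apply HB.
  - apply unif_null_on_le with (u := fun n t => Cmod (Kop g (S n) f t) ^ 2 / weight n).
    { intros n t _; rewrite Rabs_Ropp; apply Rle_refl. }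
    apply unif_null_on_div_infty; [|exact harmonic_infty].
    destruct (is_lim_seq_p_infty_eventually g g_infty 1) as [N1 HN1].
    exists (max N N1), M; intros n t Hn Ht.
    specialize (HM n t ltac:(lia) Ht); specialize (HN1 n ltac:(lia)).
    pose proof (pow2_ge_0 (Cmod (Kop g n f t))); pose proof (pow2_ge_0 (Cmod (Kop g (S n) f t))).
    rewrite Rabs_pos_eq by assumption.
    apply Rle_trans with (beta g f n t); [unfold beta; nra|exact (Rle_trans _ _ _ (Rle_abs _) HM)].
Qed.

Lemma limit_const s t : l s = l t.
Proof.
  set (a := Rmin s t); set (b := Rmax s t).
  assert (Hs : a <= s <= b) by (split; [apply Rmin_l|apply Rmax_l]).
  assert (Ht : a <= t <= b) by (split; [apply Rmin_r|apply Rmax_r]).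
  destruct (beta_limit_bounded a b) as [_ [N [M HM]]].
  assert (Hdiff : unif_null_on a b (fun n _ => nu g f n s - nu g f n t)).
  { apply unif_null_on_le with (u := fun n _ =>
      (Rsum (fun k => Cmod (Kop g k f s) ^ 2) n - Rsum (fun k => Cmod (Kop g k f t) ^ 2) n)
      / Rsum (fun k => / g k) n).
    { intros n _ _; unfold nu; right; f_equal; field; apply Rgt_not_eq, harmonic_pos. }
    apply unif_null_on_div_infty; [|exact harmonic_infty].
    exists N, (M * Rabs (s - t)); intros n _ Hn _.
    apply Rabs_sub_le_derive with (s := t) (t := s) (F' := fun c => 2 * flux g f n c)
      (F := fun x => Rsum (fun k => Cmod (Kop g k f x) ^ 2) n).
    - intros c; apply is_derive_sum_Cmod_Kop; [exact g_neq0|exact f_smooth].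
    - intros c Hc; eapply Rle_trans; [apply flux_le_beta, Rlt_le, g_pos|].
      eapply Rle_trans; [apply Rle_abs|apply HM; [exact Hn|]].
      unfold a, b; rewrite Rmin_comm, Rmax_comm; exact Hc. }
  apply cond_eq; intros eps Heps.
  destruct (nu_unif_cv a b (eps / 6)) as [N1 HN1]; [lra|].
  destruct (Hdiff (eps / 6)) as [N2 HN2]; [lra|].
  set (n := max N1 N2).
  specialize (HN1 n ltac:(lia)); specialize (HN2 n ltac:(lia) s Hs).
  pose proof (HN1 s Hs) as Hns; pose proof (HN1 t Ht) as Hnt.
  revert HN2 Hns Hnt; unfold Rabs; repeat destruct Rcase_abs; lra.
Qed.

End Limit.

Theorem lemma29 (g : nat -> R) (f : R -> C) :
  conditions g -> in_L g f ->
  exists L : R,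
    unif_cv_compact (beta g f) (fun _ => L) /\
    unif_cv_compact (nu g f) (fun _ => L / 2).
Proof.
  intros [g_pos [g_infty [_ [_ [harmonic_infty _]]]]] [f_smooth [l beta_cv]].
  assert (l_const := limit_const g f l g_pos f_smooth beta_cv g_infty harmonic_infty).
  exists (l 0); split.
  - apply unif_cv_compact_ext with l; [intros t; apply l_const|exact beta_cv].
  - apply unif_cv_compact_ext with (fun t => l t / 2); [intros t; now rewrite (l_const t 0)|].
    exact (nu_unif_cv g f l g_pos f_smooth beta_cv g_infty harmonic_infty).
Qed.
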